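(* $C_{AD}(3,6)=\log_2 27$.
   Context: There are $n$ nodes labeled $1,\dots,n$ (here $n=3$); node $i$ privately holds an input $x_i\in\{1,\dots,M\}$ (here $M=6$). Communication is over private point-to-point links of a fully connected synchronous network. A deterministic protocol $P$ is a fixed finite schedule of steps $l=1,\dots,L(P)$; in step $l$ a prescribed node $T_l$ sends to a prescribed node $R_l\neq T_l$ one symbol $f_l(x_{T_l},T_l^+(l))$, where $T_l^+(l)$ is the sequence of symbols $T_l$ has received in steps $1,\dots,l-1$; only $R_l$ receives it. Its complexity is $C(P)=\sum_{l}\log_2 S_l(P)$, with $S_l(P)$ the number of distinct values of the step-$l$ symbol over all inputs in $\{1,\dots,M\}^n$. At the end each node $i$ outputs a bit $EQ_i$ depending on $x_i$ and the symbols it received. $P$ solves MEQ-AD$(n,M)$ if for every input, $EQ_1=\cdots=EQ_n=0$ iff $x_1=\cdots=x_n$. $C_{AD}(n,M)$ is the infimum of $C(P)$ over protocols solving MEQ-AD$(n,M)$. *)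

From mathcomp Require Import all_boot.
From Stdlib Require Import Reals.

Set Implicit Arguments.
Unset Strict Implicit.
Unset Printing Implicit Defensive.

(* A deterministic protocol for n nodes with inputs in 'I_M (value k stands
   for input k+1 in {1,...,M}).  Steps are numbered 0,...,len-1 (step l here
   is step l+1 of the paper).  Symbols are natural numbers (any finite
   alphabet embeds into nat; only the number of distinct values matters). *)
Record protocol (n M : nat) := Protocol {
  len : nat;
  snd : nat -> 'I_n;
  rcv : nat -> 'I_n;
  msg : nat -> 'I_M -> seq nat -> nat;
  out : 'I_n -> 'I_M -> seq nat -> bool
}.

Section Protocols.
Variables (n M : nat).
Implicit Types (P : protocol n M) (x : {ffun 'I_n -> 'I_M}).

Definition well_formed P := forall l, l < len P -> snd P l != rcv P l.

Definition recv P (i : 'I_n) (t : seq nat) : seq nat :=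
  [seq nth 0 t k | k <- iota 0 (size t) & rcv P k == i].

Fixpoint trans P x (l : nat) : seq nat :=
  match l with
  | 0 => [::]
  | l'.+1 => let t := trans P x l' in
             rcons t (msg P l' (x (snd P l')) (recv P (snd P l') t))
  end.

Definition symbol P x (l : nat) : nat := nth 0 (trans P x (len P)) l.

Definition nvals P (l : nat) : nat :=
  size (undup [seq symbol P x l | x <- enum {ffun 'I_n -> 'I_M}]).

Definition log2 (r : R) : R := (ln r / ln 2)%R.

Definition cost P : R := \big[Rplus/0%R]_(l < len P) log2 (INR (nvals P l)).

Definition solves_MEQ_AD P :=
  well_formed P /\
  forall x, (forall i, out P i (x i) (recv P i (trans P x (len P))) = false)
            <-> (forall i j, x i = x j).

End Protocols.

From mathcomp Require Import all_boot.
From Stdlib Require Import Reals Lra.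

(* Restrict attention to the constant inputs (a, a, a).  Along each of the three
   links, the symbols carried on the constant input a colour the six input values;
   since every step uses exactly one link and a list of symbols takes at most the
   product of the per-step numbers of values, prod_l S_l bounds the product of the
   three numbers of colours.  If the colourings of the links {0,1}, {1,2}, {0,2}
   agree at (a0,a1), (a1,a2), (a0,a2) respectively, then on the input (a0,a1,a2)
   every node receives exactly what it receives on its own constant input, hence
   accepts, so a0 = a1 = a2.  An exhaustive search over the partitions of a
   6-element set shows that such triangle-free triples of colourings use at least
   27 colour combinations, so C(P) >= log2 27.  Conversely, three steps around the
   ring 0 -> 1 -> 2 -> 0, each carrying one of three linear forms mod 3 of the
   input, solve the problem with cost exactly log2 27. *)

Set Implicit Arguments.
Unset Strict Implicit.
Unset Printing Implicit Defensive.

Definition nimage (A : finType) (B : eqType) (F : A -> B) : nat :=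
  size (undup [seq F a | a <- enum A]).

Lemma nimage_le (A A' : finType) (B : eqType) (F : A -> B) (G : A' -> B) :
  (forall a, exists a', F a = G a') -> nimage F <= nimage G.
Proof.
move=> FG; apply: uniq_leq_size; first exact: undup_uniq.
move=> y; rewrite !mem_undup => /mapP [a _ ->].
by have [a' ->] := FG a; apply: map_f; rewrite mem_enum.
Qed.

Lemma nimage_comp (A : finType) (B C : eqType) (k : B -> C) (F : A -> B) :
  nimage (k \o F) <= nimage F.
Proof.
rewrite /nimage -(size_map k); apply: uniq_leq_size; first exact: undup_uniq.
by move=> y; rewrite mem_undup => /mapP [a aA ->]; rewrite /= map_f // mem_undup map_f.
Qed.

Lemma nimage_const (A : finType) (B : eqType) (b : B) : nimage (fun _ : A => b) <= 1.
Proof.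
apply: (@uniq_leq_size _ _ [:: b]); first exact: undup_uniq.
by move=> y; rewrite mem_undup => /mapP [a _ ->]; rewrite inE.
Qed.

Lemma nimage_pair (A : finType) (B1 B2 C : eqType) (c : B1 -> B2 -> C)
    (F1 : A -> B1) (F2 : A -> B2) :
  nimage (fun a => c (F1 a) (F2 a)) <= nimage F1 * nimage F2.
Proof.
rewrite -(size_allpairs c); apply: uniq_leq_size; first exact: undup_uniq.
move=> y; rewrite mem_undup => /mapP [a _ ->].
by apply: allpairs_f; rewrite mem_undup; apply: map_f; rewrite mem_enum.
Qed.

Lemma nimage_gt0 (A : finType) (B : eqType) (F : A -> B) (a : A) : 0 < nimage F.
Proof.
have : F a \in undup [seq F a | a <- enum A] by rewrite mem_undup map_f ?mem_enum.
by rewrite /nimage; case: (undup _).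
Qed.

(* An existential search that stops at the first witness: [vm_compute] evaluates
   both arguments of [||], so [has] would always scan the whole list. *)
Fixpoint lazy_has (T : Type) (p : T -> bool) (s : seq T) : bool :=
  if s is x :: s' then (if p x then true else lazy_has p s') else false.

Lemma lazy_hasE (T : Type) (p : T -> bool) (s : seq T) : lazy_has p s = has p s.
Proof. by elim: s => //= x s ->; case: (p x). Qed.

Section TriangleFreeColourings.
Variable N : nat.

Definition triangle_free (T : eqType) (f g h : 'I_N -> T) :=
  forall x0 x1 x2, f x0 = f x1 -> g x1 = g x2 -> h x0 = h x2 -> x0 = x1 /\ x1 = x2.

Fixpoint tuples (k : nat) : seq (seq nat) :=
  if k is k'.+1 then [seq v :: s | v <- iota 0 N, s <- tuples k'] else [:: [::]].

Lemma mem_tuples k s : size s = k -> all (gtn N) s -> s \in tuples k.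
Proof.
elim: k s => [|k IH] [|v s] //= [sz] /andP [vN sN].
by apply: (allpairs_f (fun v s => v :: s)); rewrite ?mem_iota ?IH.
Qed.

(* A partition of [0, N) is encoded by the map sending each point to the least
   point of its block. *)
Definition least_rep_form (s : seq nat) : bool :=
  all (fun x => (nth 0 s x <= x) && (nth 0 s (nth 0 s x) == nth 0 s x)) (iota 0 N).

Definition partitions : seq (seq nat) := [seq s <- tuples N | least_rep_form s].

Definition nblocks (s : seq nat) : nat := size (undup s).

Definition collision (a b : seq nat) : bool :=
  lazy_has (fun x0 => lazy_has (fun x1 =>
    [&& x0 != x1, nth 0 a x0 == nth 0 a x1 & nth 0 b x0 == nth 0 b x1])
  (iota 0 N)) (iota 0 N).

Definition triangle (a b c : seq nat) : bool :=
  lazy_has (fun x0 => lazy_has (fun x1 => lazy_has (fun x2 =>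
    [&& ~~ ((x0 == x1) && (x1 == x2)), nth 0 a x0 == nth 0 a x1,
        nth 0 b x1 == nth 0 b x2 & nth 0 c x0 == nth 0 c x2])
  (iota 0 N)) (iota 0 N)) (iota 0 N).

Lemma triangleP a b c : triangle a b c ->
  exists x0 x1 x2 : 'I_N, [/\ ~ (x0 = x1 /\ x1 = x2), nth 0 a x0 = nth 0 a x1,
                             nth 0 b x1 = nth 0 b x2 & nth 0 c x0 = nth 0 c x2].
Proof.
rewrite /triangle !lazy_hasE => /hasP [x0]; rewrite mem_iota => /= x0N.
rewrite lazy_hasE => /hasP [x1]; rewrite mem_iota => /= x1N.
rewrite lazy_hasE => /hasP [x2]; rewrite mem_iota => /= x2N.
case/and4P=> neq /eqP ea /eqP eb /eqP ec.
exists (Ordinal x0N), (Ordinal x1N), (Ordinal x2N); split=> //.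
by case=> /(congr1 val) /= e01 /(congr1 val) /= e12; rewrite e01 e12 !eqxx in neq.
Qed.

Lemma collision_triangle a b c : collision a b -> triangle a b c.
Proof.
rewrite /collision /triangle !lazy_hasE => /hasP [x0 x0N].
rewrite lazy_hasE => /hasP [x1 x1N] /and3P [neq ea eb].
apply/hasP; exists x0 => //; rewrite lazy_hasE; apply/hasP; exists x1 => //.
rewrite lazy_hasE; apply/hasP; exists x0 => //.
by rewrite eqxx (eq_sym x1) (negbTE neq) ea (eqP eb) !eqxx.
Qed.

Definition triangle_check (bound : nat) : bool :=
  let ps := [seq (s, nblocks s) | s <- partitions] in
  all (fun a => all (fun b => if collision a.1 b.1 then true else
    all (fun c => if bound <= a.2 * b.2 * c.2 then true else triangle a.1 b.1 c.1) ps) ps) ps.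

Lemma triangle_checkP bound a b c : triangle_check bound ->
  a \in partitions -> b \in partitions -> c \in partitions ->
  (bound <= nblocks a * nblocks b * nblocks c) || triangle a b c.
Proof.
have mem_ps s : s \in partitions -> (s, nblocks s) \in [seq (s, nblocks s) | s <- partitions].
  exact: map_f.
move=> /allP/(_ _ (mem_ps a _)) chk /[dup] aP /chk /allP/(_ _ (mem_ps b _)) {}chk.
move=> /[dup] bP /chk /=; case: ifP => [/collision_triangle -> _ _|_]; first by rewrite orbT.
by move=> /allP/(_ _ (mem_ps c _)) /[apply] /=; case: ifP.
Qed.

Section Kernel.
Variables (T : eqType) (f : 'I_N -> T).

Let values := [seq f i | i <- enum 'I_N].

Definition kernel : seq nat := [seq index (f i) values | i <- enum 'I_N].

Lemma nth_kernel (i : 'I_N) : nth 0 kernel i = index (f i) values.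
Proof. by rewrite (nth_map i) ?size_enum_ord // nth_ord_enum. Qed.

Lemma nth_values d (i : 'I_N) : nth d values i = f i.
Proof. by rewrite (nth_map i) ?size_enum_ord // nth_ord_enum. Qed.

Lemma index_values_lt (i : 'I_N) : index (f i) values < N.
Proof. by rewrite -(size_enum_ord N) -(size_map f) index_mem map_f ?mem_enum. Qed.

Lemma eq_nth_kernel (i j : 'I_N) : (nth 0 kernel i == nth 0 kernel j) = (f i == f j).
Proof.
rewrite !nth_kernel; apply/eqP/eqP => [eq_ij|-> //].
by rewrite -(nth_index (f i) (map_f f (mem_enum _ i))) eq_ij nth_index ?map_f ?mem_enum.
Qed.

Lemma kernel_partition : kernel \in partitions.
Proof.
rewrite mem_filter; apply/andP; split.
  apply/allP => k; rewrite mem_iota /= => kN; pose x := Ordinal kN.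
  have rN := index_values_lt x; pose r := Ordinal rN.
  have fr : f r = f x by rewrite -(nth_values (f x) r) nth_index ?map_f ?mem_enum.
  rewrite (nth_kernel x) (nth_kernel r) fr eqxx andbT.
  rewrite -[X in index X _](nth_values (f x) x).
  by rewrite index_nth // size_map size_enum_ord.
apply: mem_tuples; first by rewrite size_map size_enum_ord.
by apply/allP => _ /mapP [i _ ->]; apply: index_values_lt.
Qed.

Lemma nblocks_kernel : nblocks kernel <= nimage f.
Proof. exact: (nimage_comp (index^~ values) f). Qed.

End Kernel.

Lemma triangle_free_bound bound (T : eqType) (f g h : 'I_N -> T) :
  triangle_check bound -> triangle_free f g h -> bound <= nimage f * nimage g * nimage h.
Proof.
move=> chk tf.
have := triangle_checkP chk (kernel_partition f) (kernel_partition g) (kernel_partition h).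
case/orP=> [le|/triangleP [x0 [x1 [x2 [neq ea eb ec]]]]].
  by apply: (leq_trans le); rewrite !leq_mul ?nblocks_kernel.
move: ea eb ec => /eqP ea /eqP eb /eqP ec; rewrite !eq_nth_kernel in ea eb ec.
by case: neq; apply: tf; apply/eqP.
Qed.

End TriangleFreeColourings.

Lemma triangle_check_6_27 : triangle_check 6 27.
Proof. by vm_compute. Qed.

Section Execution.
Variables (n M : nat) (P : protocol n M).
Implicit Types (x : {ffun 'I_n -> 'I_M}) (i j : 'I_n) (a : 'I_M).

Lemma size_trans x l : size (trans P x l) = l.
Proof. by elim: l => //= l IH; rewrite size_rcons IH. Qed.

Lemma recv_rcons i t s : recv P i (rcons t s) =
  if rcv P (size t) == i then rcons (recv P i t) s else recv P i t.
Proof.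
rewrite /recv size_rcons -addn1 iotaD add0n filter_cat map_cat.
have -> : [seq nth 0 (rcons t s) k | k <- iota 0 (size t) & rcv P k == i] =
          [seq nth 0 t k | k <- iota 0 (size t) & rcv P k == i].
  apply/eq_in_map => k; rewrite mem_filter mem_iota add0n => /andP [_ /andP [_ kt]].
  by rewrite nth_rcons kt.
by rewrite /=; case: eqP => _; rewrite /= ?nth_rcons ?ltnn ?eqxx ?cats1 ?cats0.
Qed.

Lemma symbolE x l : l < len P ->
  symbol P x l = msg P l (x (snd P l)) (recv P (snd P l) (trans P x l)).
Proof.
rewrite /symbol; elim: (len P) => // k IH lk /=.
rewrite nth_rcons size_trans; case: ltnP => [/IH //|kl].
have -> : l = k by apply/eqP; rewrite eqn_leq kl -ltnS lk.
by rewrite eqxx.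
Qed.

Definition constant_input a : {ffun 'I_n -> 'I_M} := [ffun _ => a].

Definition on_link i j l : bool :=
  ((snd P l == i) && (rcv P l == j)) || ((snd P l == j) && (rcv P l == i)).

Lemma on_linkC i j : on_link i j =1 on_link j i.
Proof. by move=> l; rewrite /on_link orbC. Qed.

Definition link_symbols (L : seq nat) i j a : seq nat :=
  [seq symbol P (constant_input a) l | l <- L & on_link i j l].

Lemma link_symbolsC L i j : link_symbols L i j =1 link_symbols L j i.
Proof. by move=> a; rewrite /link_symbols (eq_filter (on_linkC i j)). Qed.

Definition links_agree x :=
  forall i j, let L := iota 0 (len P) in link_symbols L i j (x i) = link_symbols L i j (x j).

Lemma links_agree_symbol x l : links_agree x -> l < len P ->
  symbol P (constant_input (x (snd P l))) l = symbol P (constant_input (x (rcv P l))) l.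
Proof.
move=> agree lP; have /eq_in_map := agree (snd P l) (rcv P l); apply.
by rewrite mem_filter /on_link !eqxx mem_iota.
Qed.

(* By induction on the steps: the symbol sent at step k on x is the one the
   sender sends on its own constant input, and link agreement identifies it with
   the one sent on the receiver's constant input. *)
Lemma links_agree_recv x : links_agree x ->
  forall i, recv P i (trans P x (len P)) = recv P i (trans P (constant_input (x i)) (len P)).
Proof.
move=> agree; suff recv_k k : k <= len P ->
    forall i, recv P i (trans P x k) = recv P i (trans P (constant_input (x i)) k).
  exact: recv_k.
elim: k => [//|k IH] kP i /=; have {}IH := IH (ltnW kP).
rewrite !recv_rcons !size_trans IH; case: eqP => // <-; congr rcons.
transitivity (symbol P (constant_input (x (snd P k))) k).
  by rewrite symbolE // ffunE IH.
by rewrite (links_agree_symbol agree kP) symbolE.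
Qed.

Lemma links_agree_constant x : solves_MEQ_AD P -> links_agree x -> forall i j, x i = x j.
Proof.
case=> _ solves agree; apply/(solves x) => i; rewrite (links_agree_recv agree).
have constant j k : constant_input (x i) j = constant_input (x i) k by rewrite !ffunE.
by have := proj2 (solves _) constant i; rewrite ffunE.
Qed.

Lemma nimage_link_symbols L i j :
  nimage (link_symbols L i j) <= \prod_(l <- L | on_link i j l) nvals P l.
Proof.
elim: L => [|l L IH]; first by rewrite big_nil; apply: nimage_const.
rewrite big_cons /link_symbols /=; case: (on_link i j l) => //.
apply: leq_trans (nimage_pair _ _ _) _; rewrite leq_mul //.
by apply: nimage_le => a; exists (constant_input a).
Qed.
End Execution.

Lemma prod_partition3 (I : eqType) (r : seq I) (p q s : pred I) (F : I -> nat) :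
  (forall i, i \in r -> p i + q i + s i = 1) ->
  \prod_(i <- r | p i) F i * \prod_(i <- r | q i) F i * \prod_(i <- r | s i) F i =
  \prod_(i <- r) F i.
Proof.
move=> one; rewrite (big_mkcond p) (big_mkcond q) (big_mkcond s) -!big_split.
apply: eq_big_seq => i /one.
by case: (p i) (q i) (s i) => [] [] [] //= _; rewrite ?muln1 ?mul1n.
Qed.

Definition node0 : 'I_3 := @Ordinal 3 0 isT.
Definition node1 : 'I_3 := @Ordinal 3 1 isT.
Definition node2 : 'I_3 := @Ordinal 3 2 isT.

Lemma ord3P (i : 'I_3) : [\/ i = node0, i = node1 | i = node2].
Proof.
by case: i => [[|[|[|k]]] ki] //; [constructor 1|constructor 2|constructor 3]; apply: val_inj.
Qed.

Section ThreeNodes.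
Variables (M : nat) (P : protocol 3 M).
Let steps := iota 0 (len P).

Lemma on_link_partition : well_formed P -> forall l, l \in steps ->
  on_link P node0 node1 l + on_link P node1 node2 l + on_link P node0 node2 l = 1.
Proof.
move=> wf l; rewrite mem_iota /on_link => /wf.
by case: (ord3P (snd P l)) => ->; case: (ord3P (rcv P l)) => ->.
Qed.

Lemma link_symbols_triangle_free : solves_MEQ_AD P ->
  triangle_free (link_symbols P steps node0 node1) (link_symbols P steps node1 node2)
                (link_symbols P steps node0 node2).
Proof.
move=> solves a0 a1 a2 e01 e12 e02.
pose x : {ffun 'I_3 -> 'I_M} := [ffun i : 'I_3 => nth a0 [:: a0; a1; a2] i].
have [x0 x1 x2] : [/\ x node0 = a0, x node1 = a1 & x node2 = a2] by rewrite !ffunE.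
have agree : links_agree P x.
  move=> i j; case: (ord3P i) => ->; case: (ord3P j) => ->; rewrite ?x0 ?x1 ?x2 //;
  by symmetry; rewrite [LHS]link_symbolsC [RHS]link_symbolsC.
have same := links_agree_constant solves agree.
by split; [rewrite -x0 -x1 | rewrite -x1 -x2]; apply: same.
Qed.

End ThreeNodes.

Lemma prod_nvals_ge27 (P : protocol 3 6) :
  solves_MEQ_AD P -> 27 <= \prod_(l <- iota 0 (len P)) nvals P l.
Proof.
move=> solves; rewrite -(prod_partition3 _ (on_link_partition solves.1)).
have tf := link_symbols_triangle_free solves.
apply: leq_trans (triangle_free_bound triangle_check_6_27 tf) _.
by rewrite !leq_mul ?nimage_link_symbols.
Qed.

Definition ring_form (k v : nat) : nat := (v %% 3 + k * (v %/ 3)) %% 3.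

(* Writing v = u + 3 w with w in {0, 1}, the three forms are u, u + w and u + 2w
   mod 3; matching them around the triangle forces w_b + w_c = 2 w_a mod 3, so
   all w agree, and then all u agree. *)
Lemma ring_forms_match a b c : a < 6 -> b < 6 -> c < 6 ->
  [&& ring_form 0 b == ring_form 0 a, ring_form 1 c == ring_form 1 b
    & ring_form 2 a == ring_form 2 c] = (a == b) && (b == c).
Proof. by do 6?[case: a => [|a] //]; do 6?[case: b => [|b] //]; do 6?[case: c => [|c] //]. Qed.

(* At step i, node i sends ring_form i of its input to node i + 1 (mod 3), which
   accepts iff the symbol equals its own value of that form. *)
Definition ring_protocol : protocol 3 6 := {|
  len := 3;
  snd := fun l => match l with 0 => node0 | 1 => node1 | _ => node2 end;
  rcv := fun l => match l with 0 => node1 | 1 => node2 | _ => node0 end;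
  msg := fun l v _ => ring_form l v;
  out := fun i v r => ring_form (if val i is k.+1 then k else 2) v != head 0 r |}.

Lemma ring_protocol_trans (x : {ffun 'I_3 -> 'I_6}) :
  trans ring_protocol x (len ring_protocol) =
  [:: ring_form 0 (x node0); ring_form 1 (x node1); ring_form 2 (x node2)].
Proof. by []. Qed.

Lemma ring_protocol_accepts (x : {ffun 'I_3 -> 'I_6}) :
  (forall i, out ring_protocol i (x i)
               (recv ring_protocol i (trans ring_protocol x (len ring_protocol))) = false)
  <-> [&& ring_form 0 (x node1) == ring_form 0 (x node0),
          ring_form 1 (x node2) == ring_form 1 (x node1)
        & ring_form 2 (x node0) == ring_form 2 (x node2)].
Proof.
rewrite ring_protocol_trans; split => [accept | /and3P [e0 e1 e2] i].
  by move: (accept node0) (accept node1) (accept node2) => /= /negbFE-> /negbFE-> /negbFE->.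
by apply/negbF; case: (ord3P i) => -> /=.
Qed.

Lemma ring_protocol_solves : solves_MEQ_AD ring_protocol.
Proof.
split; first by case=> [|[|[|l]]].
move=> x; rewrite ring_protocol_accepts ring_forms_match ?ltn_ord //.
split=> [/andP [/eqP e01 /eqP e12] i j | same].
  by apply: ord_inj; case: (ord3P i) => ->; case: (ord3P j) => ->; rewrite ?e01 ?e12.
by rewrite (same node0 node1) (same node1 node2) !eqxx.
Qed.

Lemma ring_protocol_nvals l : nvals ring_protocol l <= 3.
Proof.
apply: (@uniq_leq_size _ _ (iota 0 3)); first exact: undup_uniq.
move=> _ /[!mem_undup] /mapP [x _ ->]; rewrite mem_iota /symbol ring_protocol_trans.
by case: l => [|[|[|l]]]; rewrite /= ?ltn_mod ?nth_nil.
Qed.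

Lemma log2_prod (I : Type) (r : seq I) (F : I -> nat) : (forall i, 0 < F i) ->
  \big[Rplus/0%R]_(i <- r) log2 (INR (F i)) = log2 (INR (\prod_(i <- r) F i)).
Proof.
move=> F_gt0; elim: r => [|i r IH]; first by rewrite !big_nil /log2 /= ln_1 /Rdiv Rmult_0_l.
have [Fi_gt0 prod_gt0] : (0 < INR (F i))%R /\ (0 < INR (\prod_(j <- r) F j))%R.
  by split; apply/lt_0_INR/ltP; rewrite ?prodn_gt0.
by rewrite !big_cons IH mult_INR /log2 ln_mult // /Rdiv Rmult_plus_distr_r.
Qed.

Lemma log2_INR_le (a b : nat) : 0 < a -> a <= b -> (log2 (INR a) <= log2 (INR b))%R.
Proof.
move=> a_gt0 ab; apply: Rmult_le_compat_r.
  by apply/Rlt_le/Rinv_0_lt_compat; have := ln_lt_2; lra.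
have a_gt0' : (0 < INR a)%R by apply/lt_0_INR/ltP.
case: (Rle_lt_or_eq_dec _ _ (le_INR _ _ (leP ab))) => [lt_ab|->]; last exact: Rle_refl.
exact/Rlt_le/ln_increasing.
Qed.

Lemma nvals_gt0 n M (P : protocol n M.+1) l : 0 < nvals P l.
Proof. exact: (nimage_gt0 _ [ffun _ => ord0]). Qed.

Lemma cost_log2_prod n M (P : protocol n M.+1) :
  cost P = log2 (INR (\prod_(l <- iota 0 (len P)) nvals P l)).
Proof.
rewrite -log2_prod; last exact: nvals_gt0.
have -> : iota 0 (len P) = index_iota 0 (len P) by rewrite /index_iota subn0.
by rewrite big_mkord.
Qed.

Lemma ring_protocol_cost : (cost ring_protocol <= log2 27)%R.
Proof.
rewrite cost_log2_prod -[27%R]/(IZR (Z.of_nat 27)) -INR_IZR_INZ.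
apply: log2_INR_le; first by rewrite prodn_gt0 // => l; apply: nvals_gt0.
apply: (@leq_trans (\prod_(l <- iota 0 3) 3)); last by rewrite /= !big_cons big_nil.
by apply: leq_prod => l _; apply: ring_protocol_nvals.
Qed.

Theorem mainTheorem8 :
  (forall P : protocol 3 6, solves_MEQ_AD P -> (log2 27 <= cost P)%R) /\
  (forall eps : R, (0 < eps)%R ->
     exists P : protocol 3 6, solves_MEQ_AD P /\ (cost P < log2 27 + eps)%R).
Proof.
split=> [P /prod_nvals_ge27 ge27 | eps eps_gt0].
  by rewrite cost_log2_prod -[27%R]/(IZR (Z.of_nat 27)) -INR_IZR_INZ; apply: log2_INR_le.
exists ring_protocol; split; first exact: ring_protocol_solves.
by have := ring_protocol_cost; lra.
Qed.
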